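(* Let $\mathbf{Dt},\mathbf{Da}$ be types with $\mathrm{op}:\mathrm{opsym}\to(\mathrm{index},\mathbf{Dt})\mathrm{input}\to(\mathrm{bindex},\mathbf{Da})\mathrm{input}\to\mathbf{Dt}$ and $\mathrm{abs}:\mathrm{varsort}\to(\mathbf{Dt}\to\mathbf{Dt})\to\mathbf{Da}$, and let $\mathbf{val}=\mathrm{varsort}\to\mathrm{var}\to\mathbf{Dt}$. There exist $\mathrm{sem}:\mathrm{term}\to\mathbf{val}\to\mathbf{Dt}$ and $\mathrm{semAbs}:\mathrm{abs}\to\mathbf{val}\to\mathbf{Da}$ such that for all $\rho:\mathbf{val}$, all good terms $X,Y$, and all $inp,binp$ with good values and domains of cardinality $<|\mathrm{var}|$: (i) $\mathrm{sem}(\mathrm{Var}\;xs\;x)\,\rho=\rho\;xs\;x$; (ii) $\mathrm{sem}(\mathrm{Op}\;\delta\;inp\;binp)\,\rho=\mathrm{op}\;\delta\;(\uparrow(\lambda X.\,\mathrm{sem}\;X\;\rho)\;inp)\;(\uparrow(\lambda A.\,\mathrm{semAbs}\;A\;\rho)\;binp)$; (iii) $\mathrm{semAbs}(\mathrm{Abs}\;xs\;x\;X)\,\rho=\mathrm{abs}\;xs\;(\lambda d.\,\mathrm{sem}\;X\;(\rho[(xs,x)\leftarrow d]))$; (iv) $\mathrm{sem}(X[Y/y]_{ys})\,\rho=\mathrm{sem}\;X\;(\rho[(ys,y)\leftarrow\mathrm{sem}\;Y\;\rho])$; (v) if $\mathrm{fresh}\;xs\;x\;X$ then for all $\rho,\rho'$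 that agree everywhere except possibly at $(xs,x)$, $\mathrm{sem}\;X\;\rho=\mathrm{sem}\;X\;\rho'$.
   Context: Fix types $\mathrm{var}$, $\mathrm{varsort}$, $\mathrm{index}$, $\mathrm{bindex}$, $\mathrm{opsym}$, with $|\mathrm{var}|$ an infinite regular cardinal. $(\alpha,\beta)\,\mathrm{input}$ = partial functions $\alpha\to\beta\;\mathrm{option}$; $\uparrow g\;inp$ applies $g$ to all defined values of $inp$. Terms ($\mathrm{term}$) and abstractions ($\mathrm{abs}$) are alpha-equivalence classes of the free datatypes $\mathrm{qterm}=\mathrm{qVar}\;\mathrm{varsort}\;\mathrm{var}\mid\mathrm{qOp}\;\mathrm{opsym}\;((\mathrm{index},\mathrm{qterm})\mathrm{input})\;((\mathrm{bindex},\mathrm{qabs})\mathrm{input})$, $\mathrm{qabs}=\mathrm{qAbs}\;\mathrm{varsort}\;\mathrm{var}\;\mathrm{qterm}$ ($x$ of varsort $xs$ bound in $X$ in $\mathrm{qAbs}\;xs\;x\;X$), with lifted constructors $\mathrm{Var},\mathrm{Op},\mathrm{Abs}$; $\mathrm{fresh}\;xs\;x\;X$: the variable $x$ of varsort $xs$ does not occur free in $X$; $X[Y/y]_{ys}$: capture-avoiding substitution of $Y$ for free occurrences of the variable $y$ of varsort $ys$. Good: every $\mathrm{Op}$ node has inputs with domains of cardinality $<|\mathrm{var}|$. $\rho[(xs,x)\leftarrow d]$ is the valuation equal to $\rho$ except that it maps $xs,x$ to $d$. *)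

(* Syntax with bindings (Popescu-Gunter style), infinitary
   operations, terms = alpha-equivalence classes of quasi-terms. *)
From Stdlib Require Import Classical ClassicalEpsilon Relations.
Set Implicit Arguments.

Definition decP (P : Prop) : {P} + {~ P} := excluded_middle_informative P.

Definition input (A B : Type) := A -> option B.

Definition lift {A B C : Type} (g : B -> C) (inp : input A B) : input A C :=
  fun i => match inp i with Some b => Some (g b) | None => None end.

Definition card_le (A B : Type) : Prop := exists f : A -> B, forall a a', f a = f a' -> a = a'.
Definition card_lt (A B : Type) : Prop := card_le A B /\ ~ card_le B A.

Definition infinite_regular (var : Type) : Prop :=
  card_le nat var /\
  forall (I : Type) (F : I -> Type),
    card_lt I var -> (forall i, card_lt (F i) var) -> card_lt {i : I & F i} var.

Definition dom {A B : Type} (inp : input A B) := { a : A | inp a <> None }.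

Definition pickVar {var : Type} (P : var -> Prop) (d : var) : var :=
  match decP (exists z, P z) with
  | left H => proj1_sig (constructive_indefinite_description P H)
  | right _ => d
  end.

Section Syntax.
Context (var varsort index bindex opsym : Type).

Inductive qterm : Type :=
| qVar : varsort -> var -> qterm
| qOp : opsym -> input index qterm -> input bindex qabs -> qterm
with qabs : Type :=
| qAbs : varsort -> var -> qterm -> qabs.

Fixpoint qFree (xs : varsort) (x : var) (X : qterm) {struct X} : Prop :=
  match X with
  | qVar ys y => ys = xs /\ y = x
  | qOp _ inp binp =>
      (exists i, match inp i with Some Y => qFree xs x Y | None => False end) \/
      (exists i, match binp i with Some A => qFreeAbs xs x A | None => False end)
  end
with qFreeAbs (xs : varsort) (x : var) (A : qabs) {struct A} : Prop :=
  match A with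
  | qAbs ys y Y => ~ (ys = xs /\ y = x) /\ qFree xs x Y
  end.

Fixpoint qGood (X : qterm) : Prop :=
  match X with
  | qVar _ _ => True
  | qOp _ inp binp =>
      card_lt (dom inp) var /\ card_lt (dom binp) var /\
      (forall i, match inp i with Some Y => qGood Y | None => True end) /\
      (forall i, match binp i with Some A => qGoodAbs A | None => True end)
  end
with qGoodAbs (A : qabs) : Prop :=
  match A with qAbs _ _ Y => qGood Y end.

Definition sw (xs : varsort) (x y : var) (zs : varsort) (z : var) : var :=
  if decP (zs = xs) then
    (if decP (z = x) then y else if decP (z = y) then x else z)
  else z.

Fixpoint qSwap (xs : varsort) (x y : var) (X : qterm) {struct X} : qterm :=
  match X with
  | qVar zs z => qVar zs (sw xs x y zs z)
  | qOp d inp binp =>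
      qOp d (fun i => match inp i with Some Y => Some (qSwap xs x y Y) | None => None end)
            (fun i => match binp i with Some A => Some (qSwapAbs xs x y A) | None => None end)
  end
with qSwapAbs (xs : varsort) (x y : var) (A : qabs) {struct A} : qabs :=
  match A with
  | qAbs zs z Y => qAbs zs (sw xs x y zs z) (qSwap xs x y Y)
  end.

Inductive alpha : qterm -> qterm -> Prop :=
| alphaVar : forall xs x, alpha (qVar xs x) (qVar xs x)
| alphaOp : forall d inp inp' binp binp',
    (forall i, (inp i = None /\ inp' i = None) \/
               (exists X X', inp i = Some X /\ inp' i = Some X' /\ alpha X X')) ->
    (forall i, (binp i = None /\ binp' i = None) \/
               (exists A A', binp i = Some A /\ binp' i = Some A' /\ alphaAbs A A')) ->
    alpha (qOp d inp binp) (qOp d inp' binp')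
with alphaAbs : qabs -> qabs -> Prop :=
| alphaAbs_intro : forall xs x x' X X' y,
    y <> x -> y <> x' -> ~ qFree xs y X -> ~ qFree xs y X' ->
    alpha (qSwap xs y x X) (qSwap xs y x' X') ->
    alphaAbs (qAbs xs x X) (qAbs xs x' X').

(* the equivalence generated by alpha (coincides with alpha on good quasi-terms) *)
Definition alphaEq : relation qterm := clos_refl_sym_trans qterm alpha.
Definition alphaAbsEq : relation qabs := clos_refl_sym_trans qabs alphaAbs.

Definition term : Type := { P : qterm -> Prop | exists X, P = alphaEq X }.
Definition abstr : Type := { P : qabs -> Prop | exists A, P = alphaAbsEq A }.

Definition cls (X : qterm) : term := exist _ (alphaEq X) (ex_intro _ X eq_refl).
Definition clsAbs (A : qabs) : abstr := exist _ (alphaAbsEq A) (ex_intro _ A eq_refl).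

Definition rep (T : term) : qterm :=
  proj1_sig (constructive_indefinite_description _ (proj2_sig T)).
Definition repAbs (T : abstr) : qabs :=
  proj1_sig (constructive_indefinite_description _ (proj2_sig T)).

Definition Var (xs : varsort) (x : var) : term := cls (qVar xs x).
Definition Op (d : opsym) (inp : input index term) (binp : input bindex abstr) : term :=
  cls (qOp d (lift rep inp) (lift repAbs binp)).
Definition Abs (xs : varsort) (x : var) (X : term) : abstr := clsAbs (qAbs xs x (rep X)).

Definition good (X : term) : Prop := qGood (rep X).
Definition goodAbs (A : abstr) : Prop := qGoodAbs (repAbs A).
Definition fresh (xs : varsort) (x : var) (X : term) : Prop := ~ qFree xs x (rep X).

(* capture-avoiding (parallel) substitution on quasi-terms: when passing a
   binder (xs,x), it is renamed to a variable z of sort xs that is not free in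
   the substituted terms f ys y, for (ys,y) free in the abstraction. *)
Definition updEnv (f : varsort -> var -> qterm) (xs : varsort) (x : var) (Y : qterm) :=
  fun ys y => if decP (ys = xs /\ y = x) then Y else f ys y.

Fixpoint qPsubst (f : varsort -> var -> qterm) (X : qterm) {struct X} : qterm :=
  match X with
  | qVar ys y => f ys y
  | qOp d inp binp =>
      qOp d (fun i => match inp i with Some Y => Some (qPsubst f Y) | None => None end)
            (fun i => match binp i with Some A => Some (qPsubstAbs f A) | None => None end)
  end
with qPsubstAbs (f : varsort -> var -> qterm) (A : qabs) {struct A} : qabs :=
  match A with
  | qAbs xs x Y =>
      let z := pickVar (fun z => forall ys y, qFreeAbs ys y (qAbs xs x Y) ->
                                   ~ qFree xs z (f ys y)) x in
      qAbs xs z (qPsubst (updEnv f xs x (qVar xs z)) Y)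
  end.

Definition qSubst (X Y : qterm) (ys : varsort) (y : var) : qterm :=
  qPsubst (updEnv qVar ys y Y) X.
Definition subst (X Y : term) (ys : varsort) (y : var) : term :=
  cls (qSubst (rep X) (rep Y) ys y).

End Syntax.

Definition upd {varsort var D : Type} (rho : varsort -> var -> D) (xs : varsort) (x : var) (d : D) :
  varsort -> var -> D :=
  fun ys y => if decP (ys = xs /\ y = x) then d else rho ys y.

(* The semantics is defined by structural recursion on quasi-terms, then
   shown to respect alpha-equivalence, so that it descends to terms via the
   chosen representatives.  Alpha-invariance reduces, through the swapping
   lemma, to the coincidence lemma: the value of a quasi-term depends only on
   its free variables.  For the substitution lemma the only delicate case is
   an abstraction, whose bound variable is renamed to a variable picked fresh
   for the substituted terms; such a variable exists because a good quasi-term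
   has fewer than |var| free variables, by regularity of |var|. *)
From Stdlib Require Import Classical ClassicalEpsilon FunctionalExtensionality ProofIrrelevance Relations.
Set Implicit Arguments.

Lemma card_le_trans A B C : card_le A B -> card_le B C -> card_le A C.
Proof. intros [f Hf] [g Hg]. exists (fun a => g (f a)). auto. Qed.

Lemma card_lt_le_trans A B C : card_le A B -> card_lt B C -> card_lt A C.
Proof.
  intros HAB [HBC HCB]. split; [exact (card_le_trans HAB HBC)|].
  intro HCA. exact (HCB (card_le_trans HCA HAB)).
Qed.

Lemma card_le_sig_proj (A B : Type) (P : A -> Prop) (f : {a | P a} -> B) (g : B -> A) :
  (forall a, g (f a) = proj1_sig a) -> card_le {a | P a} B.
Proof.
  intros Hgf. exists f. intros [a Ha] [b Hb] E.
  apply subset_eq_compat.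
  pose proof (Hgf (exist _ a Ha)). pose proof (Hgf (exist _ b Hb)). simpl in *. congruence.
Qed.

Lemma nat_not_card_le_bool : ~ card_le nat bool.
Proof.
  intros [h Hh].
  destruct (h 0) eqn:E0, (h 1) eqn:E1, (h 2) eqn:E2;
    first [ assert (0 = 1) by (apply Hh; congruence)
          | assert (0 = 2) by (apply Hh; congruence)
          | assert (1 = 2) by (apply Hh; congruence) ]; discriminate.
Qed.

Lemma pickVar_spec (var : Type) (P : var -> Prop) d : (exists z, P z) -> P (pickVar P d).
Proof. intro H. unfold pickVar. destruct decP; [apply proj2_sig | contradiction]. Qed.

Section SmallSets.
Variable var : Type.

Definition small (P : var -> Prop) := card_lt {z | P z} var.

Lemma small_sub (P Q : var -> Prop) : (forall z, P z -> Q z) -> small Q -> small P.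
Proof.
  intros PQ. apply card_lt_le_trans.
  apply (@card_le_sig_proj _ _ _ (fun a => exist Q (proj1_sig a) (PQ _ (proj2_sig a)))
           (@proj1_sig _ _)).
  reflexivity.
Qed.

Lemma small_exists_not (P : var -> Prop) : small P -> exists z, ~ P z.
Proof.
  intros [_ Hnot]. apply NNPP. intro Hall. apply Hnot.
  assert (HP : forall z, P z) by (intro z; apply NNPP; eauto).
  exists (fun z => exist _ z (HP z)). intros a b E. exact (f_equal (@proj1_sig _ _) E).
Qed.

Hypothesis Hvar : infinite_regular var.

Lemma card_lt_bool : card_lt bool var.
Proof.
  destruct Hvar as [Hnat _]. split.
  - apply card_le_trans with nat; [|exact Hnat].
    exists (fun b : bool => if b then 0 else 1). intros [] [] E; congruence.
  - intro Hbool. exact (nat_not_card_le_bool (card_le_trans Hnat Hbool)).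
Qed.

Lemma small_eq (a : var) : small (fun z => z = a).
Proof.
  apply card_lt_le_trans with bool; [|exact card_lt_bool].
  exists (fun _ => true). intros [z Hz] [z' Hz'] _. apply subset_eq_compat. congruence.
Qed.

Lemma small_bigcup (I : Type) (P : I -> var -> Prop) :
  card_lt I var -> (forall i, small (P i)) -> small (fun z => exists i, P i z).
Proof.
  intros HI HP. eapply card_lt_le_trans; [|exact (proj2 Hvar I _ HI HP)].
  apply (@card_le_sig_proj _ _ _
    (fun zi : {z | exists i, P i z} => let e := constructive_indefinite_description _ (proj2_sig zi) in
               existT (fun i => {z | P i z}) (proj1_sig e) (exist _ (proj1_sig zi) (proj2_sig e)))
    (fun s => proj1_sig (projT2 s))).
  reflexivity.
Qed.

Lemma small_or (P Q : var -> Prop) : small P -> small Q -> small (fun z => P z \/ Q z).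
Proof.
  intros HP HQ.
  apply small_sub with (fun z => exists b : bool, if b then P z else Q z).
  - intros z [Pz|Qz]; [exists true | exists false]; assumption.
  - apply small_bigcup; [exact card_lt_bool | intros []; assumption].
Qed.

End SmallSets.

Lemma lift_ext (A B C : Type) (g g' : B -> C) (inp : input A B) :
  (forall i b, inp i = Some b -> g b = g' b) -> lift g inp = lift g' inp.
Proof.
  intro Hgg'. apply functional_extensionality. intro i. unfold lift.
  destruct (inp i) eqn:E; [f_equal; exact (Hgg' i _ E) | reflexivity].
Qed.

Lemma lift_comp (A B C D : Type) (f : B -> C) (g : C -> D) (inp : input A B) :
  lift g (lift f inp) = lift (fun b => g (f b)) inp.
Proof. apply functional_extensionality. intro i. unfold lift. now destruct (inp i). Qed.

Lemma upd_rename (varsort var D : Type) (f : varsort -> var -> var) (rho : varsort -> var -> D)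
    xs x d ys y :
  (forall ys a b, f ys a = f ys b -> a = b) ->
  upd rho xs (f xs x) d ys (f ys y) = upd (fun zs z => rho zs (f zs z)) xs x d ys y.
Proof.
  intros Hf. unfold upd.
  destruct (decP (ys = xs /\ f ys y = f xs x)) as [[Es E]|N],
           (decP (ys = xs /\ y = x)) as [[Es' E']|N']; auto.
  - subst ys. exfalso. exact (N' (conj eq_refl (Hf _ _ _ E))).
  - subst ys y. exfalso. exact (N (conj eq_refl eq_refl)).
Qed.

Lemma sw_inj (varsort var : Type) (xs : varsort) (x y : var) ys a b :
  sw xs x y ys a = sw xs x y ys b -> a = b.
Proof.
  unfold sw. destruct (decP (ys = xs)); [|auto].
  destruct (decP (a = x)), (decP (a = y)), (decP (b = x)), (decP (b = y)); congruence.
Qed.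

Lemma clos_refl_sym_trans_invariant (A B : Type) (R : relation A) (f : A -> B) :
  (forall a b, R a b -> f a = f b) ->
  forall a b, clos_refl_sym_trans A R a b -> f a = f b.
Proof. intros Hf a b Hab. induction Hab; congruence || auto. Qed.

Lemma Some_inj (T : Type) (a b : T) : Some a = Some b -> a = b.
Proof. congruence. Qed.

Lemma None_neq_Some (T : Type) (a : T) : None <> Some a.
Proof. discriminate. Qed.

Section Syntax.
Context (var varsort index bindex opsym : Type).
Notation QT := (qterm var varsort index bindex opsym).
Notation QA := (qabs var varsort index bindex opsym).
Notation qV := (qVar index bindex opsym).

Section QtermInd.
Variables (P : QT -> Prop) (Q : QA -> Prop).
Hypotheses (HVar : forall xs x, P (qV xs x))
  (HOp : forall d inp binp, (forall i Y, inp i = Some Y -> P Y) ->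
           (forall i A, binp i = Some A -> Q A) -> P (qOp d inp binp))
  (HAbs : forall xs x Y, P Y -> Q (qAbs xs x Y)).

Fixpoint qterm_ind' (X : QT) : P X :=
  match X with
  | qVar _ _ _ xs x => HVar xs x
  | qOp d inp binp => HOp d inp binp
      (fun i => match inp i as o return forall Y, o = Some Y -> P Y with
         | Some Y' => fun Y e => eq_ind Y' P (qterm_ind' Y') Y (Some_inj e)
         | None => fun Y e => False_ind _ (None_neq_Some e) end)
      (fun i => match binp i as o return forall A, o = Some A -> Q A with
         | Some A' => fun A e => eq_ind A' Q (qabs_ind' A') A (Some_inj e)
         | None => fun A e => False_ind _ (None_neq_Some e) end)
  end
with qabs_ind' (A : QA) : Q A :=
  match A with qAbs xs x Y => HAbs xs x (qterm_ind' Y) end.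

Lemma qterm_qabs_ind : (forall X, P X) /\ (forall A, Q A).
Proof. exact (conj qterm_ind' qabs_ind'). Qed.

End QtermInd.

Lemma qSwap_qOp (xs : varsort) (x y : var) (d : opsym) (inp : input index QT)
    (binp : input bindex QA) :
  qSwap xs x y (qOp d inp binp) =
  qOp d (lift (qSwap xs x y) inp) (lift (qSwapAbs xs x y) binp).
Proof. reflexivity. Qed.

Lemma qPsubst_qOp (f : varsort -> var -> QT) (d : opsym) (inp : input index QT)
    (binp : input bindex QA) :
  qPsubst f (qOp d inp binp) = qOp d (lift (qPsubst f) inp) (lift (qPsubstAbs f) binp).
Proof. reflexivity. Qed.

Lemma alphaEq_rep_cls (X : QT) : alphaEq (rep (cls X)) X.
Proof.
  unfold rep, cls; cbn.
  destruct (constructive_indefinite_description _ _) as [W HW]; cbn.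
  rewrite <- HW. apply rst_refl.
Qed.

Lemma alphaAbsEq_repAbs_clsAbs (A : QA) : alphaAbsEq (repAbs (clsAbs A)) A.
Proof.
  unfold repAbs, clsAbs; cbn.
  destruct (constructive_indefinite_description _ _) as [W HW]; cbn.
  rewrite <- HW. apply rst_refl.
Qed.

Hypothesis Hvar : infinite_regular var.

Lemma qFree_small :
  (forall X : QT, qGood X -> forall xs, small (fun z => qFree xs z X)) /\
  (forall A : QA, qGoodAbs A -> forall xs, small (fun z => qFreeAbs xs z A)).
Proof.
  apply qterm_qabs_ind.
  - intros xs x _ ys. apply small_sub with (fun z => z = x); [intros z [_ ->]; reflexivity|].
    exact (small_eq Hvar x).
  - intros d inp binp IHinp IHbinp [Hdom [Hbdom [Ginp Gbinp]]] xs.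
    apply small_sub with (fun z =>
      (exists i : dom inp, match inp (proj1_sig i) with Some Y => qFree xs z Y | None => False end) \/
      (exists i : dom binp, match binp (proj1_sig i) with Some A => qFreeAbs xs z A | None => False end)).
    + intros z [[i Hi] | [i Hi]]; [left | right].
      * assert (Ei : inp i <> None) by (destruct (inp i); [discriminate | contradiction]).
        exists (exist _ i Ei). exact Hi.
      * assert (Ei : binp i <> None) by (destruct (binp i); [discriminate | contradiction]).
        exists (exist _ i Ei). exact Hi.
    + apply (small_or Hvar); apply (small_bigcup Hvar); try assumption; intros [i Ei]; cbn.
      * specialize (Ginp i). destruct (inp i) eqn:E; [exact (IHinp i _ E Ginp xs) | contradiction].
      * specialize (Gbinp i). destruct (binp i) eqn:E; [exact (IHbinp i _ E Gbinp xs) | contradiction].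
  - intros xs x Y IH GY ys. apply small_sub with (fun z => qFree ys z Y).
    + intros z [_ Hz]. exact Hz.
    + exact (IH GY ys).
Qed.

(* The invariant of the substitution lemma: per sort, fewer than |var|
   variables occur free in the non-trivial part of the environment, so that a
   fresh binder can always be picked. *)
Definition env_fv (f : varsort -> var -> QT) (xs : varsort) (z : var) :=
  exists ys y, f ys y <> qV ys y /\ qFree xs z (f ys y).

Definition small_env (f : varsort -> var -> QT) := forall xs, small (env_fv f xs).

Lemma small_env_updEnv f xs x z : small_env f -> small_env (updEnv f xs x (qV xs z)).
Proof.
  intros Hf ws. apply small_sub with (fun w => env_fv f ws w \/ w = z).
  - intros w [ys [y [Hmoved Hfree]]]. revert Hmoved Hfree. unfold updEnv.
    destruct decP.
    + intros _ [_ ->]. right. reflexivity.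
    + intros Hmoved Hfree. left. exists ys, y. auto.
  - exact (small_or Hvar (Hf ws) (small_eq Hvar z)).
Qed.

Lemma small_env_single ys y (Y : QT) : qGood Y -> small_env (updEnv qV ys y Y).
Proof.
  intros GY xs. apply small_sub with (fun z => qFree xs z Y).
  - intros z [ws [w [Hmoved Hfree]]]. revert Hmoved Hfree. unfold updEnv.
    destruct decP as [_|N]; [intros _ Hfree; exact Hfree | intros Hmoved; exfalso; auto].
  - exact (proj1 qFree_small Y GY xs).
Qed.

Lemma exists_fresh_binder f xs x (Y : QT) : qGood Y -> small_env f ->
  exists z, forall ys y, qFreeAbs ys y (qAbs xs x Y) -> ~ qFree xs z (f ys y).
Proof.
  intros GY Hf.
  destruct (small_exists_not (small_or Hvar (proj1 qFree_small Y GY xs) (Hf xs))) as [z Hz].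
  exists z. intros ys y [_ HyY] Hzf.
  destruct (classic (f ys y = qV ys y)) as [E|E].
  - rewrite E in Hzf. destruct Hzf as [-> ->]. exact (Hz (or_introl HyY)).
  - apply Hz. right. exists ys, y. auto.
Qed.

Section Semantics.
Context (Dt Da : Type) (op : opsym -> input index Dt -> input bindex Da -> Dt)
  (abs : varsort -> (Dt -> Dt) -> Da).
Notation val := (varsort -> var -> Dt).

Fixpoint qsem (X : QT) (rho : val) {struct X} : Dt :=
  match X with
  | qVar _ _ _ xs x => rho xs x
  | qOp d inp binp =>
      op d (lift (fun Y => qsem Y rho) inp) (lift (fun A => qsemAbs A rho) binp)
  end
with qsemAbs (A : QA) (rho : val) {struct A} : Da :=
  match A with qAbs xs x Y => abs xs (fun d => qsem Y (upd rho xs x d)) end.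

Lemma qsem_qSwap xs x y :
  (forall X rho, qsem (qSwap xs x y X) rho = qsem X (fun zs z => rho zs (sw xs x y zs z))) /\
  (forall A rho, qsemAbs (qSwapAbs xs x y A) rho = qsemAbs A (fun zs z => rho zs (sw xs x y zs z))).
Proof.
  apply qterm_qabs_ind.
  - reflexivity.
  - intros d inp binp IHinp IHbinp rho.
    rewrite qSwap_qOp. cbn [qsem]. rewrite !lift_comp.
    f_equal; apply lift_ext; eauto.
  - intros zs z Y IH rho. cbn [qSwapAbs qsemAbs]. f_equal.
    apply functional_extensionality. intro d. rewrite IH. f_equal.
    do 2 (apply functional_extensionality; intro).
    apply upd_rename. intros ws. exact (@sw_inj _ _ xs x y ws).
Qed.

Lemma qsem_agree :
  (forall X rho rho', (forall zs z, qFree zs z X -> rho zs z = rho' zs z) ->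
     qsem X rho = qsem X rho') /\
  (forall A rho rho', (forall zs z, qFreeAbs zs z A -> rho zs z = rho' zs z) ->
     qsemAbs A rho = qsemAbs A rho').
Proof.
  apply qterm_qabs_ind.
  - intros xs x rho rho' Hrho. apply Hrho. split; reflexivity.
  - intros d inp binp IHinp IHbinp rho rho' Hrho. cbn [qsem].
    f_equal; apply lift_ext; intros i B E; [apply (IHinp i B E) | apply (IHbinp i B E)];
      intros zs z Hfree; apply Hrho; [left | right]; exists i; rewrite E; exact Hfree.
  - intros xs x Y IH rho rho' Hrho. cbn [qsemAbs]. f_equal.
    apply functional_extensionality. intro d. apply IH. intros ws w Hfree. unfold upd.
    destruct decP as [_|Nw]; [reflexivity|].
    apply Hrho. split; [intros [-> ->]; exact (Nw (conj eq_refl eq_refl)) | exact Hfree].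
Qed.

Lemma upd_sw (rho : val) xs x y d zs z : ~ (zs = xs /\ z = y) ->
  upd rho xs x d zs z = upd rho xs y d zs (sw xs y x zs z).
Proof.
  intros Hzy. unfold upd, sw.
  destruct (decP (zs = xs)) as [->|Ns].
  - destruct (decP (z = y)) as [->|Ny]; [exfalso; auto|].
    destruct (decP (z = x)) as [->|Nx];
      repeat destruct decP as [[_ ?]|?]; intuition congruence.
  - repeat destruct decP as [[? _]|?]; intuition congruence.
Qed.

Lemma qsem_upd_qSwap X xs x y (rho : val) d : ~ qFree xs y X ->
  qsem X (upd rho xs x d) = qsem (qSwap xs y x X) (upd rho xs y d).
Proof.
  intros Hy. rewrite (proj1 (qsem_qSwap xs y x)).
  apply (proj1 qsem_agree). intros zs z Hz. apply upd_sw.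
  intros [-> ->]. exact (Hy Hz).
Qed.

Fixpoint qsem_alpha (X X' : QT) (H : alpha X X') {struct H} :
  forall rho, qsem X rho = qsem X' rho
with qsemAbs_alphaAbs (A A' : QA) (H : alphaAbs A A') {struct H} :
  forall rho, qsemAbs A rho = qsemAbs A' rho.
Proof.
  - destruct H as [xs x | d inp inp' binp binp' Hinp Hbinp]; intro rho; [reflexivity|].
    cbn [qsem]. f_equal; apply functional_extensionality; intro i; unfold lift.
    + destruct (Hinp i) as [[-> ->] | [Y [Y' [-> [-> HY]]]]]; [reflexivity|].
      f_equal. exact (qsem_alpha _ _ HY rho).
    + destruct (Hbinp i) as [[-> ->] | [B [B' [-> [-> HB]]]]]; [reflexivity|].
      f_equal. exact (qsemAbs_alphaAbs _ _ HB rho).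
  - destruct H as [xs x x' X X' y _ _ Hy Hy' Hswap]. intro rho. cbn [qsemAbs].
    f_equal. apply functional_extensionality. intro d.
    rewrite (qsem_upd_qSwap _ _ x _ rho d Hy), (qsem_upd_qSwap _ _ x' _ rho d Hy').
    exact (qsem_alpha _ _ Hswap _).
Qed.

Lemma qsem_alphaEq X X' rho : alphaEq X X' -> qsem X rho = qsem X' rho.
Proof.
  apply (clos_refl_sym_trans_invariant (fun Y => qsem Y rho)).
  intros Y Y' H. exact (qsem_alpha H rho).
Qed.

Lemma qsemAbs_alphaAbsEq A A' rho : alphaAbsEq A A' -> qsemAbs A rho = qsemAbs A' rho.
Proof.
  apply (clos_refl_sym_trans_invariant (fun B => qsemAbs B rho)).
  intros B B' H. exact (qsemAbs_alphaAbs H rho).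
Qed.

Lemma qsem_qPsubst :
  (forall X : QT, qGood X -> forall f, small_env f -> forall rho,
      qsem (qPsubst f X) rho = qsem X (fun zs z => qsem (f zs z) rho)) /\
  (forall A : QA, qGoodAbs A -> forall f, small_env f -> forall rho,
      qsemAbs (qPsubstAbs f A) rho = qsemAbs A (fun zs z => qsem (f zs z) rho)).
Proof.
  apply qterm_qabs_ind.
  - reflexivity.
  - intros d inp binp IHinp IHbinp [_ [_ [Ginp Gbinp]]] f Hf rho.
    rewrite qPsubst_qOp. cbn [qsem]. rewrite !lift_comp.
    f_equal; apply lift_ext; intros i B E.
    + specialize (Ginp i). rewrite E in Ginp. exact (IHinp i B E Ginp f Hf rho).
    + specialize (Gbinp i). rewrite E in Gbinp. exact (IHbinp i B E Gbinp f Hf rho).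
  - intros xs x Y IH GY f Hf rho. cbn [qPsubstAbs qsemAbs].
    match goal with |- context [pickVar ?P x] =>
      pose proof (pickVar_spec P x (exists_fresh_binder xs x Y GY Hf)) as Hz;
      set (z := pickVar P x) in * end.
    clearbody z. f_equal. apply functional_extensionality. intro d.
    rewrite (IH GY _ (small_env_updEnv xs x z Hf)).
    (* Off the bound variable x, the environment is f, whose relevant values
       do not mention z, so the update of rho at z is invisible. *)
    apply (proj1 qsem_agree). intros ws w Hw. unfold updEnv, upd at 2.
    destruct (decP (ws = xs /\ w = x)) as [_|Nw].
    + cbn. unfold upd. destruct decP as [_|N]; [reflexivity | exfalso; auto].
    + apply (proj1 qsem_agree). intros vs v Hv. unfold upd.
      destruct (decP (vs = xs /\ v = z)) as [[-> ->]|_]; [exfalso | reflexivity].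
      apply (Hz ws w); [|exact Hv]. split; [intros [-> ->]; auto | exact Hw].
Qed.

Lemma qsem_qSubst (X Y : QT) ys y rho : qGood X -> qGood Y ->
  qsem (qSubst X Y ys y) rho = qsem X (upd rho ys y (qsem Y rho)).
Proof.
  intros GX GY. unfold qSubst.
  rewrite (proj1 qsem_qPsubst X GX _ (small_env_single ys y Y GY)).
  f_equal. do 2 (apply functional_extensionality; intro).
  unfold updEnv, upd. destruct decP; reflexivity.
Qed.

End Semantics.
End Syntax.

Theorem theorem3 (var varsort index bindex opsym : Type)
  (Hvar : infinite_regular var)
  (Dt Da : Type)
  (op : opsym -> input index Dt -> input bindex Da -> Dt)
  (abs : varsort -> (Dt -> Dt) -> Da) :
  exists (sem : term var varsort index bindex opsym -> (varsort -> var -> Dt) -> Dt)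
         (semAbs : abstr var varsort index bindex opsym -> (varsort -> var -> Dt) -> Da),
    forall rho : varsort -> var -> Dt,
      (* (i) *)
      (forall xs x, sem (Var index bindex opsym xs x) rho = rho xs x) /\
      (* (ii) *)
      (forall (delta : opsym) (inp : input index (term var varsort index bindex opsym))
              (binp : input bindex (abstr var varsort index bindex opsym)),
          (forall i X, inp i = Some X -> good X) ->
          (forall i A, binp i = Some A -> goodAbs A) ->
          card_lt (dom inp) var -> card_lt (dom binp) var ->
          sem (Op delta inp binp) rho =
          op delta (lift (fun X => sem X rho) inp) (lift (fun A => semAbs A rho) binp)) /\
      (* (iii) *)
      (forall xs x X, good X ->
          semAbs (Abs xs x X) rho = abs xs (fun d => sem X (upd rho xs x d))) /\
      (* (iv) *)
      (forall X Y ys y, good X -> good Y ->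
          sem (subst X Y ys y) rho = sem X (upd rho ys y (sem Y rho))) /\
      (* (v) *)
      (forall xs x X, good X -> fresh xs x X ->
          forall rho' : varsort -> var -> Dt,
            (forall ys y, ~ (ys = xs /\ y = x) -> rho ys y = rho' ys y) ->
            sem X rho = sem X rho').
Proof.
  exists (fun X rho => qsem op abs (rep X) rho), (fun A rho => qsemAbs op abs (repAbs A) rho).
  intro rho. split; [|split; [|split; [|split]]].
  - intros xs x. exact (qsem_alphaEq op abs rho (alphaEq_rep_cls _)).
  - intros delta inp binp _ _ _ _. unfold Op.
    rewrite (qsem_alphaEq op abs rho (alphaEq_rep_cls _)). cbn [qsem].
    rewrite !lift_comp. reflexivity.
  - intros xs x X _. exact (qsemAbs_alphaAbsEq op abs rho (alphaAbsEq_repAbs_clsAbs _)).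
  - intros X Y ys y GX GY. unfold subst.
    rewrite (qsem_alphaEq op abs rho (alphaEq_rep_cls _)).
    exact (qsem_qSubst Hvar op abs _ _ ys y rho GX GY).
  - intros xs x X _ Hfresh rho' Hrho. apply (proj1 (qsem_agree _ op abs)).
    intros zs z Hz. apply Hrho. intros [-> ->]. exact (Hfresh Hz).
Qed.
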